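(* Let $X\in\mathbb{R}^{n\times p}$ have unit $\ell_2$-norm columns, let $\beta\in\mathbb{R}^p$ be $k$-sparse with support $\mathcal{S}$, let $\eta\in\mathbb{R}^n$ have independent $\mathcal{N}(0,\sigma^2)$ entries, and let $y=X\beta+\eta$. Suppose $X$ satisfies the $(k,b)$-screening condition for $\beta$ with parameter $b=b(n,p)\in(0,1/\sqrt{k})$, and assume $$\frac{\beta_{\min}}{\|\beta\|_2} > 2b + \frac{4\sqrt{\sigma^2\log p}}{\|\beta\|_2}.$$ Then, whenever the event $\mathcal{G}_\eta=\{\|X^\top\eta\|_\infty\le 2\sqrt{\sigma^2\log p}\}$ occurs, the output $\hat{\mathcal{S}}$ of Algorithm 1 satisfies $\mathcal{S}\subset\hat{\mathcal{S}}$ for every integer $d\le p$ with $$d \ge \left\lceil \frac{\sqrt{k}}{\frac{\beta_{\min}}{\|\beta\|_2} - 2b - \frac{4\sqrt{\sigma^2\log p}}{\|\beta\|_2}}\right\rceil .$$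
   Context: Notation: $[[p]]=\{1,\dots,p\}$; $n,p,k$ are positive integers with $p\ge 2$ and $k<n$. $X\in\mathbb{R}^{n\times p}$ has columns $X_1,\dots,X_p$, each with $\|X_j\|_2=1$. $\beta\in\mathbb{R}^p$ is $k$-sparse: its support $\mathcal{S}=\{i\in[[p]]:\beta_i\neq 0\}$ has exactly $k$ elements; $\mathcal{S}^c=[[p]]\setminus\mathcal{S}$; $\beta_{\min}=\min_{i\in\mathcal{S}}|\beta_i|$. Algorithm 1 (marginal correlation screening): given $X$, $y$ and an integer $d\in\{1,\dots,p\}$, compute $w=X^\top y$ and output a set $\hat{\mathcal{S}}\subset[[p]]$ with $|\hat{\mathcal{S}}|=d$ consisting of indices of the $d$ largest values of $|w_i|$, i.e. $|w_i|\ge |w_j|$ for all $i\in\hat{\mathcal{S}}$, $j\notin\hat{\mathcal{S}}$ (ties broken arbitrarily). $(k,b)$-screening condition: for a fixed $k$-sparse $\beta$ with support $\mathcal{S}$, the matrix $X$ (unit-norm columns) satisfies it if there is $b=b(n,p)$ with $0<b<1/\sqrt{k}$ such that (SC-1) $\max_{i\in\mathcal{S}}\big|\sum_{j\in\mathcal{S},\,j\neq i}X_i^\top X_j\beta_j\big|\le b\,\|\beta\|_2$, and (SC-2) $\max_{i\in\mathcal{S}^c}\big|\sum_{j\in\mathcal{S}}X_i^\top X_j\beta_j\big|\le b\,\|\beta\|_2$. *)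

From Stdlib Require Import Reals List ZArith.
Open Scope R_scope.

Fixpoint rsum (n : nat) (f : nat -> R) : R :=
  match n with O => 0 | S m => rsum m f + f m end.

Fixpoint supp_card (p : nat) (beta : nat -> R) : nat :=
  match p with
  | O => O
  | S m => (supp_card m beta + if Req_EM_T (beta m) 0 then 0 else 1)%nat
  end.

(* A matrix X in R^{n x p} is a function (row i, column j) -> X i j. *)
Definition inner (n : nat) (u v : nat -> R) : R := rsum n (fun i => u i * v i).
Definition col (X : nat -> nat -> R) (j : nat) : nat -> R := fun i => X i j.
Definition colip (n : nat) (X : nat -> nat -> R) (i j : nat) : R :=
  inner n (col X i) (col X j).
Definition norm2 (p : nat) (v : nat -> R) : R := sqrt (rsum p (fun j => v j ^ 2)).

Definition unit_columns (n p : nat) (X : nat -> nat -> R) : Prop :=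
  forall j, (j < p)%nat -> norm2 n (col X j) = 1.

Definition matvec (p : nat) (X : nat -> nat -> R) (beta : nat -> R) : nat -> R :=
  fun i => rsum p (fun j => X i j * beta j).
Definition tmatvec (n : nat) (X : nat -> nat -> R) (v : nat -> R) : nat -> R :=
  fun j => inner n (col X j) v.

Definition is_beta_min (p : nat) (beta : nat -> R) (bmin : R) : Prop :=
  (exists i, (i < p)%nat /\ beta i <> 0 /\ Rabs (beta i) = bmin) /\
  (forall i, (i < p)%nat -> beta i <> 0 -> bmin <= Rabs (beta i)).

Definition screening_condition (n p k : nat) (X : nat -> nat -> R)
    (beta : nat -> R) (b : R) : Prop :=
  0 < b /\ b < 1 / sqrt (INR k) /\
  (forall i, (i < p)%nat -> beta i <> 0 ->
     Rabs (rsum p (fun j => if Nat.eq_dec j i then 0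
                             else if Req_EM_T (beta j) 0 then 0
                             else colip n X i j * beta j))
     <= b * norm2 p beta) /\
  (forall i, (i < p)%nat -> beta i = 0 ->
     Rabs (rsum p (fun j => if Req_EM_T (beta j) 0 then 0
                             else colip n X i j * beta j))
     <= b * norm2 p beta).

(* Shat (a list of indices) is a possible output of Algorithm 1 with input X, y, d
   (ties broken arbitrarily). *)
Definition alg1_output (n p : nat) (X : nat -> nat -> R) (y : nat -> R)
    (d : nat) (Shat : list nat) : Prop :=
  let w := tmatvec n X y in
  NoDup Shat /\ length Shat = d /\ (forall i, In i Shat -> (i < p)%nat) /\
  (forall i j, In i Shat -> (j < p)%nat -> ~ In j Shat -> Rabs (w j) <= Rabs (w i)).

Definition Rceil (r : R) : Z := (- (up (- r) - 1))%Z.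

From Stdlib Require Import Reals List ZArith Lra Lia.
Open Scope R_scope.

(* Write [w = X^T y]. Splitting [w_j = beta_j + sum_{l <> j} <X_j, X_l> beta_l + <X_j, eta>],
   the screening condition and the event [G_eta] give [|w_j| >= beta_min - b |beta| - 2 s] on
   the support and [|w_j| <= b |beta| + 2 s] off it, where [s = sqrt (sigma^2 log p)]. The
   hypothesis on [beta_min] says exactly that the first bound exceeds the second, so every
   support index beats every off-support index. Since [beta_min sqrt k <= |beta|], the
   ceiling in the hypothesis on [d] is at least [k]; hence a top-[d] selection missing some
   support index would consist of support indices only, and together with the missing one
   give [d + 1 <= k] distinct support indices. *)

Lemma rsum_ext n f g : (forall i, (i < n)%nat -> f i = g i) -> rsum n f = rsum n g.
Proof.
  induction n as [|n IH]; intros Hfg; simpl; auto.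
  rewrite IH by (intros; apply Hfg; lia). rewrite Hfg by lia. reflexivity.
Qed.

Lemma rsum_plus n f g : rsum n (fun i => f i + g i) = rsum n f + rsum n g.
Proof. induction n as [|n IH]; simpl; [lra|]. rewrite IH. lra. Qed.

Lemma rsum_scal n c f : rsum n (fun i => c * f i) = c * rsum n f.
Proof. induction n as [|n IH]; simpl; [lra|]. rewrite IH. lra. Qed.

Lemma rsum_swap n p f :
  rsum n (fun i => rsum p (fun l => f i l)) = rsum p (fun l => rsum n (fun i => f i l)).
Proof.
  induction n as [|n IH]; simpl.
  - induction p as [|p IHp]; simpl; [lra|]. rewrite <- IHp. lra.
  - rewrite IH, <- rsum_plus. reflexivity.
Qed.

Lemma rsum_nonneg n f : (forall i, (i < n)%nat -> 0 <= f i) -> 0 <= rsum n f.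
Proof.
  induction n as [|n IH]; intros Hf; simpl; [lra|].
  assert (0 <= f n) by (apply Hf; lia).
  assert (0 <= rsum n f) by (apply IH; intros; apply Hf; lia).
  lra.
Qed.

Lemma rsum_pick n f j : (j < n)%nat ->
  rsum n f = f j + rsum n (fun l => if Nat.eq_dec l j then 0 else f l).
Proof.
  induction n as [|n IH]; intros Hj; [lia|]. simpl.
  destruct (Nat.eq_dec n j) as [<-|Hnj].
  - rewrite (rsum_ext n (fun l => if Nat.eq_dec l n then 0 else f l) f); [lra|].
    intros l Hl. destruct (Nat.eq_dec l n); [lia|reflexivity].
  - rewrite IH by lia. lra.
Qed.

Lemma Rabs_add3_ge a c e : Rabs a - Rabs c - Rabs e <= Rabs (a + c + e).
Proof. unfold Rabs; repeat destruct Rcase_abs; lra. Qed.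

Lemma Rabs_add3_le a c e : Rabs (a + c + e) <= Rabs a + Rabs c + Rabs e.
Proof. unfold Rabs; repeat destruct Rcase_abs; lra. Qed.

Lemma Rceil_ge r : r <= IZR (Rceil r).
Proof. unfold Rceil. destruct (archimed (- r)). rewrite opp_IZR, minus_IZR. lra. Qed.

Lemma le_of_Rceil_sqrt_div k d delta :
  0 < delta -> delta * sqrt (INR k) <= 1 ->
  (Rceil (sqrt (INR k) / delta) <= Z.of_nat d)%Z -> (k <= d)%nat.
Proof.
  intros Hdelta Hle Hceil.
  assert (Hk : INR k <= sqrt (INR k) / delta).
  { apply (Rmult_le_reg_r delta); auto. unfold Rdiv. rewrite Rmult_assoc, Rinv_l by lra.
    assert (Hsk := sqrt_pos (INR k)).
    assert (sqrt (INR k) * sqrt (INR k) = INR k) by (apply sqrt_sqrt, pos_INR).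
    nra. }
  apply IZR_le in Hceil. rewrite <- INR_IZR_INZ in Hceil.
  apply INR_le. generalize (Rceil_ge (sqrt (INR k) / delta)). lra.
Qed.

Lemma gap_ratio_mul_sqrt_le_1 k N bmin b s :
  0 < N -> 0 <= b -> 0 <= s -> bmin * sqrt (INR k) <= N ->
  (bmin / N - 2 * b - 4 * s / N) * sqrt (INR k) <= 1.
Proof.
  intros HN Hb Hs HkN. apply (Rmult_le_reg_r N); auto. unfold Rdiv.
  replace ((bmin * / N - 2 * b - 4 * s * / N) * sqrt (INR k) * N)
    with (bmin * sqrt (INR k) - (2 * b * N + 4 * s) * sqrt (INR k)) by (field; lra).
  assert (0 <= (2 * b * N + 4 * s) * sqrt (INR k)) by (apply Rmult_le_pos, sqrt_pos; nra).
  lra.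
Qed.

Lemma gap_of_gap_ratio N bmin b s :
  0 < N -> bmin / N > 2 * b + 4 * s / N -> bmin > 2 * b * N + 4 * s.
Proof.
  intros HN Hgap. apply (Rmult_gt_compat_r N) in Hgap; auto.
  unfold Rdiv in Hgap. rewrite !Rmult_plus_distr_r, !Rmult_assoc, Rinv_l in Hgap by lra.
  lra.
Qed.

Definition suppb (beta : nat -> R) (j : nat) : bool :=
  if Req_EM_T (beta j) 0 then false else true.

Lemma supp_card_filter p beta : supp_card p beta = length (filter (suppb beta) (seq 0 p)).
Proof.
  induction p as [|p IH]; auto. rewrite seq_S, filter_app, length_app, <- IH. simpl.
  unfold suppb. destruct (Req_EM_T (beta p) 0); simpl; lia.
Qed.

Lemma supp_card_mul_sq_le p beta bmin : 0 <= bmin ->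
  (forall i, (i < p)%nat -> beta i <> 0 -> bmin <= Rabs (beta i)) ->
  INR (supp_card p beta) * bmin ^ 2 <= rsum p (fun j => beta j ^ 2).
Proof.
  intros Hbmin; induction p as [|p IH]; intros Hmin; [simpl; lra|].
  cbn [rsum supp_card]. rewrite plus_INR.
  assert (INR (supp_card p beta) * bmin ^ 2 <= rsum p (fun j => beta j ^ 2))
    by (apply IH; intros; apply Hmin; auto; lia).
  destruct (Req_EM_T (beta p) 0) as [_|Hbp]; simpl INR.
  - assert (0 <= beta p ^ 2) by apply pow2_ge_0. lra.
  - assert (bmin <= Rabs (beta p)) by (apply Hmin; auto).
    assert (beta p ^ 2 = Rabs (beta p) ^ 2) by (unfold Rabs; destruct Rcase_abs; nra).
    assert (bmin ^ 2 <= Rabs (beta p) ^ 2) by (apply pow_incr; lra).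
    lra.
Qed.

Lemma beta_min_mul_sqrt_supp_le_norm p beta bmin :
  is_beta_min p beta bmin -> bmin * sqrt (INR (supp_card p beta)) <= norm2 p beta.
Proof.
  intros [[i0 [_ [_ <-]]] Hmin].
  assert (Hb := Rabs_pos (beta i0)).
  unfold norm2. rewrite <- (sqrt_pow2 (Rabs (beta i0))), <- sqrt_mult by
    (auto; apply pow2_ge_0 || apply pos_INR).
  apply sqrt_le_1_alt. rewrite Rmult_comm. apply supp_card_mul_sq_le; auto.
Qed.

Lemma norm2_pos_of_beta_min p beta bmin : is_beta_min p beta bmin -> 0 < norm2 p beta.
Proof.
  intros [[i0 [Hi0 [Hb0 _]]] _]. apply sqrt_lt_R0.
  rewrite (rsum_pick p _ i0 Hi0).
  assert (0 <= rsum p (fun l => if Nat.eq_dec l i0 then 0 else beta l ^ 2)).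
  { apply rsum_nonneg. intros l _. destruct Nat.eq_dec; [lra|apply pow2_ge_0]. }
  assert (0 < beta i0 ^ 2) by (apply Rsqr_pos_lt in Hb0; unfold Rsqr in Hb0; nra).
  lra.
Qed.

Lemma top_selection_contains_separated p d (P : nat -> bool) (score : nat -> R)
    (Shat : list nat) :
  NoDup Shat -> length Shat = d -> (forall i, In i Shat -> (i < p)%nat) ->
  (forall i j, In i Shat -> (j < p)%nat -> ~ In j Shat -> score j <= score i) ->
  (length (filter P (seq 0 p)) <= d)%nat ->
  (forall j m, (j < p)%nat -> (m < p)%nat -> P j = true -> P m = false ->
     score m < score j) ->
  forall i, (i < p)%nat -> P i = true -> In i Shat.
Proof.
  intros Hnd Hlen Hrange Htop Hcard Hsep i Hi HPi.
  destruct (In_dec Nat.eq_dec i Shat) as [|Hnin]; auto. exfalso.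
  assert (Hall : forall m, In m Shat -> P m = true).
  { intros m Hm. destruct (P m) eqn:HPm; auto.
    generalize (Htop m i Hm Hi Hnin) (Hsep i m Hi (Hrange m Hm) HPi HPm). lra. }
  assert (Hincl : incl (i :: Shat) (filter P (seq 0 p))).
  { intros m Hm. apply filter_In. split.
    - apply in_seq. destruct Hm as [<-|Hm]; [|specialize (Hrange m Hm)]; lia.
    - destruct Hm as [<-|Hm]; auto. }
  generalize (NoDup_incl_length (NoDup_cons i Hnin Hnd) Hincl). simpl. lia.
Qed.

Lemma colip_diag n p X j : unit_columns n p X -> (j < p)%nat -> colip n X j j = 1.
Proof.
  intros Hunit Hj. specialize (Hunit j Hj). unfold norm2 in Hunit.
  assert (Hq : 0 <= rsum n (fun i => col X j i ^ 2)) by (apply rsum_nonneg; intros; nra).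
  generalize (sqrt_sqrt _ Hq). rewrite Hunit, Rmult_1_r. intros ->.
  apply rsum_ext. intros. simpl. ring.
Qed.

Lemma tmatvec_matvec_add n p X beta eta j :
  tmatvec n X (fun i => matvec p X beta i + eta i) j =
  rsum p (fun l => colip n X j l * beta l) + tmatvec n X eta j.
Proof.
  unfold tmatvec, inner, matvec, colip, inner, col.
  rewrite (rsum_ext n _ (fun i => rsum p (fun l => X i j * X i l * beta l) + X i j * eta i)).
  - rewrite rsum_plus, rsum_swap. f_equal.
    apply rsum_ext. intros. rewrite Rmult_comm, <- rsum_scal. apply rsum_ext. intros. ring.
  - intros. rewrite Rmult_plus_distr_l, <- rsum_scal. f_equal. apply rsum_ext. intros. ring.
Qed.

Lemma tmatvec_signal_noise n p X beta eta j :
  unit_columns n p X -> (j < p)%nat ->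
  tmatvec n X (fun i => matvec p X beta i + eta i) j =
  beta j + rsum p (fun l => if Nat.eq_dec l j then 0
                            else if Req_EM_T (beta l) 0 then 0
                            else colip n X j l * beta l)
  + tmatvec n X eta j.
Proof.
  intros Hunit Hj.
  rewrite tmatvec_matvec_add, (rsum_pick p _ j Hj), colip_diag with (p := p) by auto.
  rewrite Rmult_1_l. do 2 f_equal. apply rsum_ext. intros l _.
  destruct (Nat.eq_dec l j); auto. destruct (Req_EM_T (beta l) 0) as [->|]; auto. ring.
Qed.

Section Screening.

Variables (n p k : nat) (X : nat -> nat -> R) (beta eta : nat -> R) (b s : R).
Hypothesis Hunit : unit_columns n p X.
Hypothesis Hscreen : screening_condition n p k X beta b.
Hypothesis Hnoise : forall j, (j < p)%nat -> Rabs (tmatvec n X eta j) <= 2 * s.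

Let w := tmatvec n X (fun i => matvec p X beta i + eta i).

Lemma screened_score_support_ge j : (j < p)%nat -> beta j <> 0 ->
  Rabs (beta j) - b * norm2 p beta - 2 * s <= Rabs (w j).
Proof.
  intros Hj Hbj. destruct Hscreen as [_ [_ [SC1 _]]].
  unfold w. rewrite tmatvec_signal_noise by auto.
  generalize (Rabs_add3_ge (beta j) (rsum p (fun l => if Nat.eq_dec l j then 0
      else if Req_EM_T (beta l) 0 then 0 else colip n X j l * beta l)) (tmatvec n X eta j)).
  generalize (SC1 j Hj Hbj) (Hnoise j Hj). lra.
Qed.

Lemma screened_score_offsupport_le j : (j < p)%nat -> beta j = 0 ->
  Rabs (w j) <= b * norm2 p beta + 2 * s.
Proof.
  intros Hj Hbj. destruct Hscreen as [_ [_ [_ SC2]]].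
  unfold w. rewrite tmatvec_signal_noise by auto.
  rewrite (rsum_ext p _ (fun l => if Req_EM_T (beta l) 0 then 0 else colip n X j l * beta l)).
  2:{ intros l _. destruct (Nat.eq_dec l j) as [->|]; auto.
      destruct (Req_EM_T (beta j) 0); tauto. }
  eapply Rle_trans; [apply Rabs_add3_le|].
  rewrite Hbj, Rabs_R0. generalize (SC2 j Hj Hbj) (Hnoise j Hj). lra.
Qed.

Lemma screened_score_separated bmin :
  is_beta_min p beta bmin -> bmin > 2 * b * norm2 p beta + 4 * s ->
  forall j m, (j < p)%nat -> (m < p)%nat -> beta j <> 0 -> beta m = 0 ->
  Rabs (w m) < Rabs (w j).
Proof.
  intros [_ Hmin] Hgap j m Hj Hm Hbj Hbm.
  generalize (screened_score_support_ge j Hj Hbj) (screened_score_offsupport_le m Hm Hbm)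
    (Hmin j Hj Hbj).
  lra.
Qed.

End Screening.

Theorem theorem1 (n p k : nat) (X : nat -> nat -> R) (beta eta : nat -> R)
    (sigma b bmin : R) :
  (2 <= p)%nat -> (0 < k)%nat -> (k < n)%nat ->
  unit_columns n p X ->
  supp_card p beta = k ->
  is_beta_min p beta bmin ->
  screening_condition n p k X beta b ->
  bmin / norm2 p beta > 2 * b + 4 * sqrt (sigma ^ 2 * ln (INR p)) / norm2 p beta ->
  (* the event G_eta *)
  (forall j, (j < p)%nat ->
     Rabs (tmatvec n X eta j) <= 2 * sqrt (sigma ^ 2 * ln (INR p))) ->
  forall (d : nat) (Shat : list nat),
    (1 <= d)%nat -> (d <= p)%nat ->
    (Rceil (sqrt (INR k) /
       (bmin / norm2 p beta - 2 * b - 4 * sqrt (sigma ^ 2 * ln (INR p)) / norm2 p beta))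
       <= Z.of_nat d)%Z ->
    alg1_output n p X (fun i => matvec p X beta i + eta i) d Shat ->
    forall i, (i < p)%nat -> beta i <> 0 -> In i Shat.
Proof.
  intros _ _ _ Hunit Hsupp Hbmin Hscreen Hgap Hnoise d Shat _ _ Hceil
    [Hnd [Hlen [Hrange Htop]]] i Hi Hbi.
  set (s := sqrt (sigma ^ 2 * ln (INR p))) in *.
  set (N := norm2 p beta) in *.
  assert (Hs : 0 <= s) by apply sqrt_pos.
  assert (Hb : 0 < b) by apply Hscreen.
  assert (HN : 0 < N) by exact (norm2_pos_of_beta_min p beta bmin Hbmin).
  assert (Hkd : (k <= d)%nat).
  { apply (le_of_Rceil_sqrt_div k d (bmin / N - 2 * b - 4 * s / N)); auto; [lra|].
    apply gap_ratio_mul_sqrt_le_1; try lra.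
    rewrite <- Hsupp. apply beta_min_mul_sqrt_supp_le_norm, Hbmin. }
  apply gap_of_gap_ratio in Hgap; auto.
  apply (top_selection_contains_separated p d (suppb beta)
           (fun j => Rabs (tmatvec n X (fun i => matvec p X beta i + eta i) j)) Shat);
    auto; [rewrite <- supp_card_filter; lia| |unfold suppb; destruct Req_EM_T; tauto].
  intros j m Hj Hm. unfold suppb.
  destruct (Req_EM_T (beta j) 0) as [|Hbj]; [discriminate|].
  destruct (Req_EM_T (beta m) 0) as [Hbm|]; [|discriminate]. intros _ _.
  exact (screened_score_separated n p k X beta eta b s Hunit Hscreen Hnoise bmin Hbmin Hgap
           j m Hj Hm Hbj Hbm).
Qed.
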